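(* Let $\mathcal{X}\subseteq\mathbb{R}^d$ be nonempty, closed and convex, and let $f=\frac1n\sum_{i=1}^nf_i$, where each $f_i:\mathbb{R}^d\to\mathbb{R}$ is differentiable, $\mu_i$-strongly convex and $L_i$-smooth on an open convex set containing $\mathcal{X}$, with $0<\mu_i\le L_i$. Let $x_\star\in\operatorname{arg\,min}_{x\in\mathcal{X}}f(x)$, $x_{\star,i}\in\operatorname{arg\,min}_{x\in\mathcal{X}}f_i(x)$, and $D:=\max_i\|x_{\star,i}-x_\star\|$. Define $\theta_i:=\frac{2\sqrt{\mu_iL_i}}{L_i+\mu_i}$, $\rho_i:=\frac{L_i-\mu_i}{L_i+\mu_i}=\sqrt{1-\theta_i^2}$, $\bar\rho:=\frac1n\sum_{i=1}^n\rho_i$. Let $x_0\in\mathcal{X}$, let $i_k$ be sampled uniformly from $\{1,\dots,n\}$ independently of the past, and let $x_{k+1}\in\operatorname{arg\,min}_{z\in\mathcal{X}\cap\mathcal{B}(x_k,t_k)}\langle\nabla f_{i_k}(x_k),z\rangle$ with $t_k:=\theta_{i_k}\|x_k-x_{\star,i_k}\|$. Then for every $k\ge0$, $\|x_{k+1}-x_{\star,i_k}\|^2\le\rho_{i_k}^2\|x_k-x_{\star,i_k}\|^2$, and consequently $$\mathbb{E}\|x_k-x_\star\|\le\bar\rho^k\|x_0-x_\star\|+\frac{1+\bar\rho}{1-\bar\rho}D.$$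
   Context: $\|\cdot\|$ is the Euclidean norm, $\mathcal{B}(x,t):=\{y:\|y-x\|\le t\}$; $L_i$-smooth: $\nabla f_i$ is $L_i$-Lipschitz; $\mu_i$-strongly convex: $f_i(y)\ge f_i(x)+\langle\nabla f_i(x),y-x\rangle+\frac{\mu_i}2\|y-x\|^2$. *)

From HB Require Import structures.
From mathcomp Require Import all_boot all_order all_algebra.
From mathcomp Require Import all_classical all_reals all_analysis.
Set Implicit Arguments. Unset Strict Implicit. Unset Printing Implicit Defensive.
Import Order.TTheory GRing.Theory Num.Theory.
Import numFieldNormedType.Exports.
Local Open Scope classical_set_scope.
Local Open Scope ring_scope.

(* Euclidean inner product and Euclidean norm (the library norm on matrices is
   the max norm, so we define the Euclidean one explicitly). *)
Definition dotv {R : realType} {d : nat} (u v : 'rV[R]_d) : R :=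
  \sum_(j < d) u ord0 j * v ord0 j.

Definition enorm {R : realType} {d : nat} (u : 'rV[R]_d) : R :=
  Num.sqrt (dotv u u).

Definition eball {R : realType} {d : nat} (x : 'rV[R]_d) (t : R) : set 'rV[R]_d :=
  [set y | enorm (y - x) <= t].

Definition grad {R : realType} {d : nat} (f : 'rV[R]_d -> R) (x : 'rV[R]_d) : 'rV[R]_d :=
  \row_(j < d) ('d f x) (delta_mx ord0 j : 'rV[R]_d).

Definition convex_set_ {R : realType} {d : nat} (A : set 'rV[R]_d) : Prop :=
  forall x y t, A x -> A y -> 0 <= t -> t <= 1 -> A ((1 - t) *: x + t *: y).

Definition is_argmin {T : Type} {R : realType} (g : T -> R) (A : set T) (x : T) : Prop :=
  A x /\ forall y, A y -> g x <= g y.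

Definition strongly_convex_on {R : realType} {d : nat} (mu : R) (f : 'rV[R]_d -> R)
  (U : set 'rV[R]_d) : Prop :=
  forall x y, U x -> U y ->
    f x + dotv (grad f x) (y - x) + mu / 2 * enorm (y - x) ^+ 2 <= f y.

Definition smooth_on {R : realType} {d : nat} (L : R) (f : 'rV[R]_d -> R)
  (U : set 'rV[R]_d) : Prop :=
  forall x y, U x -> U y -> enorm (grad f x - grad f y) <= L * enorm (x - y).

(* One step moves x_k to the minimizer z of the linear form <g, .>, g = grad f_i x_k,
   over X intersected with the ball B(x_k, theta_i r), r = |x_k - x_i*|.  Write
   h = grad f_i x_i*.  Co-coercivity of the gradient of a mu-strongly convex,
   L-smooth function, |g - h|^2 + mu L r^2 <= (L + mu) <g - h, x_k - x_i*>, bounds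
   the angle between g - h and x_k - x_i* by arccos theta_i (AM-GM).  If z were
   outside B(x_i*, rho_i r), moving from z towards x_i* would stay in the ball around
   x_k (power of a point, theta_i^2 + rho_i^2 = 1), so <g, x_i* - z> >= 0; with the
   first-order condition <h, z - x_i*> >= 0 this leaves z - x_k no choice but to be
   the point of the ball antipodal to g - h, which lies in B(x_i*, rho_i r) after
   all.  The triangle inequality turns the contraction into
   |x_{k+1} - x*| <= rho_i |x_k - x*| + (1 + rho_i) D, and averaging over the index
   gives a linear recursion for the mean with rate rhobar and fixed point
   (1 + rhobar)/(1 - rhobar) D.

   Co-coercivity is usually derived from the descent lemma at reflected points,
   which need not lie in the open set U; it is proved on short subsegments of
   [a, b] instead and summed up with Cauchy-Schwarz. *)

From HB Require Import structures.
From mathcomp Require Import all_boot all_order all_algebra.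
From mathcomp Require Import all_classical all_reals all_analysis.
From mathcomp Require Import ring lra.
Import Order.TTheory GRing.Theory Num.Theory.
Import numFieldNormedType.Exports.
Local Open Scope classical_set_scope.
Local Open Scope ring_scope.
Set Implicit Arguments. Unset Strict Implicit. Unset Printing Implicit Defensive.

Section Euclidean.
Variables (R : realType) (d : nat).
Implicit Types (u v w a b : 'rV[R]_d) (e t : R).

Lemma dotvC u v : dotv u v = dotv v u.
Proof. by apply: eq_bigr => j _; rewrite mulrC. Qed.

Lemma dotvDl u v w : dotv (u + v) w = dotv u w + dotv v w.
Proof. by rewrite /dotv -big_split; apply: eq_bigr => j _; rewrite !mxE mulrDl. Qed.

Lemma dotvDr u v w : dotv w (u + v) = dotv w u + dotv w v.
Proof. by rewrite dotvC dotvDl !(dotvC w). Qed.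

Lemma dotvZl t u v : dotv (t *: u) v = t * dotv u v.
Proof. by rewrite /dotv mulr_sumr; apply: eq_bigr => j _; rewrite !mxE mulrA. Qed.

Lemma dotvZr t u v : dotv v (t *: u) = t * dotv v u.
Proof. by rewrite dotvC dotvZl dotvC. Qed.

Lemma dotvNl u v : dotv (- u) v = - dotv u v.
Proof. by rewrite -scaleN1r dotvZl mulN1r. Qed.

Lemma dotvNr u v : dotv v (- u) = - dotv v u.
Proof. by rewrite dotvC dotvNl dotvC. Qed.

Lemma dotvBl u v w : dotv (u - v) w = dotv u w - dotv v w.
Proof. by rewrite dotvDl dotvNl. Qed.

Lemma dotvBr u v w : dotv w (u - v) = dotv w u - dotv w v.
Proof. by rewrite dotvDr dotvNr. Qed.

Lemma dotv0l u : dotv 0 u = 0.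
Proof. by rewrite /dotv big1 // => j _; rewrite mxE mul0r. Qed.

Lemma dotv_suml (I : Type) (r : seq I) (P : pred I) (q : I -> 'rV[R]_d) v :
  dotv (\sum_(i <- r | P i) q i) v = \sum_(i <- r | P i) dotv (q i) v.
Proof. exact: (big_morph _ (fun x y => dotvDl x y v) (dotv0l v)). Qed.

Lemma dotvv_ge0 u : 0 <= dotv u u.
Proof. by apply: sumr_ge0 => j _; rewrite -expr2 sqr_ge0. Qed.

Lemma dotvv_eq0 u : (dotv u u == 0) = (u == 0).
Proof.
apply/idP/eqP => [|->]; last by rewrite dotv0l.
rewrite psumr_eq0 => [/allP u0|j _]; last by rewrite -expr2 sqr_ge0.
apply/rowP => j; rewrite mxE.
by apply/eqP; rewrite -sqrf_eq0 expr2; exact: u0 (mem_index_enum _).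
Qed.

Lemma dotvDD u v : dotv (u + v) (u + v) = dotv u u + 2 * dotv u v + dotv v v.
Proof. by rewrite !(dotvDl, dotvDr) (dotvC v u); ring. Qed.

Lemma dotv_double_le u v : 2 * dotv u v <= dotv u u + dotv v v.
Proof.
by have := dotvv_ge0 (u - v); rewrite !(dotvBl, dotvBr) (dotvC v u); lra.
Qed.

Lemma dotv_sum_le (m : nat) (q : 'I_m -> 'rV[R]_d) :
  dotv (\sum_(j < m) q j) (\sum_(j < m) q j) <= m%:R * \sum_(j < m) dotv (q j) (q j).
Proof.
rewrite dotv_suml; under eq_bigr do rewrite dotvC dotv_suml.
rewrite -(ler_pM2l (ltr0n _ 2)) mulr_sumr.
apply: le_trans (_ : \sum_j \sum_k (dotv (q k) (q k) + dotv (q j) (q j)) <= _).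
  by apply: ler_sum => j _; rewrite mulr_sumr; apply: ler_sum => k _; apply: dotv_double_le.
under eq_bigr do rewrite big_split /= sumr_const card_ord.
rewrite big_split /= sumr_const card_ord sumrMnl -mulr_natl; lra.
Qed.

Lemma dotv_telescope_le (m : nat) (Q : nat -> 'rV[R]_d) u t :
  (forall j, (j < m)%N -> dotv (Q j.+1 - Q j) (Q j.+1 - Q j) <= t * dotv (Q j.+1 - Q j) u) ->
  dotv (Q m - Q 0%N) (Q m - Q 0%N) <= m%:R * t * dotv (Q m - Q 0%N) u.
Proof.
move=> hQ; rewrite -(telescope_sumr _ (leq0n m)) big_mkord.
apply: le_trans (dotv_sum_le _) _; rewrite -mulrA ler_wpM2l // dotv_suml mulr_sumr.
by apply: ler_sum => j _; exact: hQ.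
Qed.

Lemma dotv_convex_comb e a b :
  dotv ((1 - e) *: a + e *: b) ((1 - e) *: a + e *: b) =
  (1 - e) * dotv a a + e * dotv b b - e * (1 - e) * dotv (a - b) (a - b).
Proof. by rewrite !(dotvDl, dotvDr, dotvNl, dotvNr, dotvZl, dotvZr) (dotvC b a); ring. Qed.

(* [dotv b b - t ^+ 2] is the power of [b] with respect to the ball of radius [t];
   the point of the chord through [a] at distance [(1 - e) |a - b|] from [b] is
   therefore inside the ball. *)
Lemma convex_comb_in_ball e a b t : 0 <= e <= 1 -> dotv a a <= t ^+ 2 ->
  (1 - e) * dotv (a - b) (a - b) = dotv b b - t ^+ 2 ->
  dotv ((1 - e) *: a + e *: b) ((1 - e) *: a + e *: b) <= t ^+ 2.
Proof.
move=> /andP[e0 e1] ha hab; rewrite dotv_convex_comb -mulrA hab.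
have : (1 - e) * dotv a a <= (1 - e) * t ^+ 2 by rewrite ler_wpM2l // subr_ge0.
lra.
Qed.

Lemma enorm_ge0 u : 0 <= enorm u.
Proof. exact: sqrtr_ge0. Qed.

Lemma enorm_sqr u : enorm u ^+ 2 = dotv u u.
Proof. by rewrite sqr_sqrtr // dotvv_ge0. Qed.

Lemma enorm0 : enorm (0 : 'rV[R]_d) = 0.
Proof. by rewrite /enorm dotv0l sqrtr0. Qed.

Lemma enormN u : enorm (- u) = enorm u.
Proof. by rewrite /enorm dotvNl dotvNr opprK. Qed.

Lemma enorm_gt0 u : (0 < enorm u) = (u != 0).
Proof. by rewrite sqrtr_gt0 lt0r dotvv_eq0 dotvv_ge0 andbT. Qed.

Lemma enorm_le_sqr u t : 0 <= t -> dotv u u <= t ^+ 2 -> enorm u <= t.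
Proof. by move=> t0; rewrite -enorm_sqr ler_pXn2r ?nnegrE ?enorm_ge0. Qed.

Lemma coord_le_enorm u j : `|u ord0 j| <= enorm u.
Proof.
rewrite /enorm -sqrtr_sqr ler_sqrt ?dotvv_ge0 // /dotv (bigD1 j) //= -expr2 lerDl.
by apply: sumr_ge0 => i _; rewrite -expr2 sqr_ge0.
Qed.

Lemma cauchy_schwarz u v : dotv u v <= enorm u * enorm v.
Proof.
have [->|u0] := eqVneq u 0; first by rewrite dotv0l mulr_ge0 ?enorm_ge0.
have [->|v0] := eqVneq v 0; first by rewrite dotvC dotv0l mulr_ge0 ?enorm_ge0.
have uv0 : 0 < enorm u * enorm v by rewrite mulr_gt0 ?enorm_gt0.
have := dotvv_ge0 (enorm v *: u - enorm u *: v).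
rewrite !(dotvBl, dotvBr, dotvZl, dotvZr) -!enorm_sqr (dotvC v u) => h.
by rewrite -(ler_pM2l uv0); nra.
Qed.

Lemma ler_enormD u v : enorm (u + v) <= enorm u + enorm v.
Proof.
apply: enorm_le_sqr; first by rewrite addr_ge0 ?enorm_ge0.
rewrite !(dotvDl, dotvDr) (dotvC v u) -!enorm_sqr.
by have := cauchy_schwarz u v; lra.
Qed.

Lemma enorm_recenter_le a b u u' (rho D : R) :
  0 <= rho -> enorm (b - u) <= rho * enorm (a - u) -> enorm (u - u') <= D ->
  enorm (b - u') <= rho * enorm (a - u') + (1 + rho) * D.
Proof.
move=> rho0 hb hu.
have hbu := ler_enormD (b - u) (u - u'); rewrite addrA subrK in hbu.
have hau := ler_enormD (a - u') (u' - u).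
rewrite addrA subrK -(opprB u u') enormN in hau.
have := ler_wpM2l rho0 hau; have := ler_wpM2l rho0 hu; lra.
Qed.

Lemma scale_eq_of_dotv_le w a t : enorm a <= t -> dotv w a <= - (t * enorm w) ->
  enorm w *: a = - (t *: w).
Proof.
move=> hat hwa; apply/eqP; rewrite -subr_eq0 opprK -dotvv_eq0 eq_le dotvv_ge0 andbT.
have t0 : 0 <= t := le_trans (enorm_ge0 a) hat.
have aa : dotv a a <= t ^+ 2 by rewrite -enorm_sqr lerXn2r ?nnegrE ?enorm_ge0.
have tw0 : 0 <= t * enorm w by rewrite mulr_ge0 ?enorm_ge0.
rewrite !(dotvDl, dotvDr, dotvZl, dotvZr) (dotvC a w) -(enorm_sqr w).
have : enorm w ^+ 2 * dotv a a <= enorm w ^+ 2 * t ^+ 2 by rewrite ler_wpM2l ?sqr_ge0.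
have : t * enorm w * dotv w a <= t * enorm w * - (t * enorm w) by rewrite ler_wpM2l.
nra.
Qed.

Lemma antipodal_dotv_le w a u t s : 0 < enorm w -> 0 <= t ->
  enorm a <= t -> dotv w a <= - (t * enorm w) -> s * enorm w <= dotv w u ->
  dotv a u <= - (t * s).
Proof.
move=> w0 t0 hat hwa hwu.
have := congr1 (dotv ^~ u) (scale_eq_of_dotv_le hat hwa).
rewrite dotvZl dotvNl dotvZl => key.
by rewrite -(ler_pM2l w0) key; have := ler_wpM2l t0 hwu; lra.
Qed.

End Euclidean.

Lemma ler_of_ler_addr_divSn (R : realType) (a b c : R) :
  (forall N : nat, a <= b + c / N.+1%:R) -> a <= b.
Proof.
move=> h; have [c0|c0] := lerP c 0.
  by apply: le_trans (h 0%N) _; rewrite divr1 gerDl.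
rewrite leNgt; apply/negP => ba.
have /ltr_add_invr[k hk] : b / c < a / c by rewrite ltr_pM2r ?invr_gt0.
have := h k; apply/negP; rewrite -ltNge.
by move: hk; rewrite -(ltr_pM2r c0) mulrDl !divfK ?gt_eqF // mulrC.
Qed.

Lemma exists_natS_ge (R : archiFieldType) (a : R) : exists N : nat, a <= N.+1%:R.
Proof.
exists (Num.bound `|a|); apply: le_trans (ler_norm a) (ltW _).
by apply: lt_le_trans (archi_boundP (normr_ge0 a)) _; rewrite ler_nat.
Qed.

Lemma convex_set_segment (R : realType) (d : nat) (U : set 'rV[R]_d) x z t :
  convex_set_ U -> U x -> U z -> 0 <= t <= 1 -> U (x + t *: (z - x)).
Proof.
move=> convU Ux Uz /andP[t0 t1].
have -> : x + t *: (z - x) = (1 - t) *: x + t *: z.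
  by rewrite scalerBr scalerBl scale1r addrCA addrC.
exact: convU.
Qed.

Lemma open_enorm_ball (R : realType) (d : nat) (U : set 'rV[R]_d) a : open U -> U a ->
  exists2 r, 0 < r & forall e, enorm e <= r -> U (a + e).
Proof.
move=> oU Ua; have /nbhs_ballP[r r0 hr] : nbhs a U by apply: oU.
exists (r / 2) => [|e he]; first by rewrite divr_gt0.
apply: hr; rewrite mx_norm_ball /ball_ /= opprD addNKr.
change (mx_norm (- e) < r); rewrite mx_normN mx_normrE.
apply: bigmax_lt => // -[i j] _ /=; rewrite ord1.
apply: le_lt_trans (coord_le_enorm _ _) _; apply: le_lt_trans he _.
by rewrite ltr_pdivrMr // ltr_pMr // ltr1n.
Qed.

Lemma open_convex_segment_nbhs (R : realType) (d : nat) (U : set 'rV[R]_d) a b :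
  open U -> convex_set_ U -> U a -> U b ->
  exists2 r, 0 < r & forall t e, 0 <= t <= 1 -> enorm e <= r -> U (a + t *: (b - a) + e).
Proof.
move=> openU convU Ua Ub.
have [ra ra0 Ha] := open_enorm_ball openU Ua.
have [rb rb0 Hb] := open_enorm_ball openU Ub.
exists (Num.min ra rb) => [|t e t01 he]; first by rewrite lt_min ra0 rb0.
have -> : a + t *: (b - a) + e = (a + e) + t *: ((b + e) - (a + e)).
  by rewrite opprD addrACA subrr addr0 addrAC.
apply: convex_set_segment => //; [apply: Ha | apply: Hb];
  by apply: le_trans he _; rewrite ge_min lexx ?orbT.
Qed.

(* The gradient enters only through the inequalities below, so it is kept
   abstract; [grad f] is substituted in the end. *)
Section Smooth.
Variables (R : realType) (d : nat) (U : set 'rV[R]_d) (f : 'rV[R]_d -> R)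
  (G : 'rV[R]_d -> 'rV[R]_d) (L : R).
Hypotheses (convU : convex_set_ U)
  (f_cvx : forall x y, U x -> U y -> f x + dotv (G x) (y - x) <= f y)
  (G_lip : forall x y, U x -> U y -> enorm (G x - G y) <= L * enorm (x - y)).

Lemma lipschitz_dotv_le a b : U a -> U b ->
  dotv (G a - G b) (a - b) <= L * dotv (a - b) (a - b).
Proof.
move=> Ua Ub; apply: (le_trans (cauchy_schwarz _ _)).
by rewrite -enorm_sqr expr2 mulrA ler_wpM2r ?enorm_ge0 ?G_lip.
Qed.

Lemma descent_step x z s t : U x -> U z -> 0 <= s -> s < t -> t <= 1 ->
  f (x + t *: (z - x)) <= f (x + s *: (z - x))
    + (t - s) * (dotv (G x) (z - x) + L * t * dotv (z - x) (z - x)).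
Proof.
move=> Ux Uz s0 st t1; set v := z - x.
have t0 : 0 < t := le_lt_trans s0 st.
have Ut : U (x + t *: v) by apply: convex_set_segment; rewrite // ltW.
have Us : U (x + s *: v) by apply: convex_set_segment; rewrite // s0 (ltW (lt_le_trans st t1)).
have hG : dotv (G (x + t *: v)) v <= dotv (G x) v + L * t * dotv v v.
  have := lipschitz_dotv_le Ut Ux; rewrite addrAC subrr add0r dotvBl !(dotvZl, dotvZr).
  by move=> h; rewrite -(ler_pM2l t0); lra.
have e : x + s *: v - (x + t *: v) = - ((t - s) *: v).
  by apply/rowP => j; rewrite !mxE; ring.
have := f_cvx Ut Us; rewrite e dotvNr dotvZr.
have ts0 : 0 <= t - s by rewrite subr_ge0 ltW.
by have := ler_wpM2l ts0 hG; lra.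
Qed.

Lemma descent x z : U x -> U z ->
  f z <= f x + dotv (G x) (z - x) + L / 2 * dotv (z - x) (z - x).
Proof.
move=> Ux Uz; set v := z - x; set g := dotv (G x) v; set V := dotv v v.
apply: (@ler_of_ler_addr_divSn _ _ _ (L / 2 * V)) => N.
have N0 : 0 < N.+1%:R :> R by rewrite ltr0n.
pose t k : R := k%:R / N.+1%:R.
have t0 k : 0 <= t k by rewrite divr_ge0.
have tS k : t k.+1 = t k + N.+1%:R^-1 by rewrite /t -natr1 mulrDl mul1r.
have t1 k : (k <= N.+1)%N -> t k <= 1 by move=> kN; rewrite ler_pdivrMr // mul1r ler_nat.
have riemann k : (k <= N.+1)%N ->
    f (x + t k *: v) <= f x + t k * g + L / 2 * V * (t k * (t k + N.+1%:R^-1)).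
  elim: k => [|k IH] kN; first by rewrite /t mul0r scale0r addr0 !mul0r mulr0 !addr0.
  have tt : t k < t k.+1 by rewrite tS ltrDl invr_gt0.
  have := descent_step Ux Uz (t0 k) tt (t1 _ kN); rewrite -/v -/g -/V tS.
  have := IH (ltnW kN); set h := N.+1%:R^-1; set a := t k => IHk hstep.
  have e1 : f (x + (a + h) *: v)
      <= f x + a * g + L / 2 * V * (a * (a + h)) + h * (g + L * (a + h) * V) by lra.
  by apply: le_trans e1 _; rewrite le_eqVlt; apply/orP; left; apply/eqP; field.
have := riemann _ (leqnn _); rewrite /t divff ?gt_eqF // scale1r /v addrC subrK.
by rewrite !mul1r mulrDr mulr1 addrA.
Qed.

Lemma argmin_first_order (X : set 'rV[R]_d) c w :
  convex_set_ X -> X `<=` U -> is_argmin f X c -> X w -> 0 <= dotv (G c) (w - c).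
Proof.
move=> convX XU [Xc cmin] Xw; set v := w - c.
rewrite -oppr_le0; apply: (@ler_of_ler_addr_divSn _ _ _ (L / 2 * dotv v v)) => N.
set s := N.+1%:R^-1.
have s0 : 0 < s by rewrite invr_gt0 ltr0n.
have Xs : X (c + s *: v).
  by apply: convex_set_segment => //; rewrite ltW //= invf_le1 ?ltr0n // ler1n.
have ev : c + s *: v - c = s *: v by rewrite addrAC subrr add0r.
have := descent (XU _ Xc) (XU _ Xs); rewrite ev !(dotvZl, dotvZr).
have := cmin _ Xs => hmin hdesc.
by rewrite add0r -(ler_pM2l s0); lra.
Qed.

End Smooth.

Section Cocoercive.
Variables (R : realType) (d : nat) (U : set 'rV[R]_d) (phi : 'rV[R]_d -> R)
  (P : 'rV[R]_d -> 'rV[R]_d) (k K : R).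
Hypotheses (openU : open U) (convU : convex_set_ U) (k0 : 0 < k)
  (phi_cvx : forall x z, U x -> U z -> phi x + dotv (P x) (z - x) <= phi z)
  (phi_descent : forall x z, U x -> U z ->
     phi z <= phi x + dotv (P x) (z - x) + k / 2 * dotv (z - x) (z - x))
  (P_lip : forall a b, U a -> U b ->
     dotv (P a - P b) (P a - P b) <= K * dotv (a - b) (a - b)).

Lemma reflection_lower_bound a b : U a -> U b -> U (b - k^-1 *: (P b - P a)) ->
  phi a + dotv (P a) (b - a) + k^-1 / 2 * dotv (P b - P a) (P b - P a) <= phi b.
Proof.
move=> Ua Ub Uc; have := phi_cvx Ua Uc; have := phi_descent Ub Uc.
set q := P b - P a.
have -> : b - k^-1 *: q - b = - (k^-1 *: q) by rewrite addrAC subrr add0r.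
have -> : b - k^-1 *: q - a = (b - a) - k^-1 *: q by rewrite addrAC.
have hq : dotv (P b) q - dotv (P a) q = dotv q q by rewrite -dotvBl.
clearbody q; rewrite !(dotvNl, dotvNr, dotvBr, dotvZl, dotvZr) opprK.
have -> : k / 2 * (k^-1 * (k^-1 * dotv q q)) = k^-1 / 2 * dotv q q.
  by field; rewrite gt_eqF.
move=> hd hc.
have : k^-1 * dotv (P b) q - k^-1 * dotv (P a) q = k^-1 * dotv q q by rewrite -mulrBr hq.
lra.
Qed.

Lemma cocoercive_of_reflections a b : U a -> U b ->
  U (b - k^-1 *: (P b - P a)) -> U (a - k^-1 *: (P a - P b)) ->
  dotv (P b - P a) (P b - P a) <= k * dotv (P b - P a) (b - a).
Proof.
move=> Ua Ub Uab Uba.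
have := reflection_lower_bound Ua Ub Uab; have := reflection_lower_bound Ub Ua Uba.
rewrite -(opprB (P b)) -(opprB b a) !(dotvNl, dotvNr) opprK => h1 h2.
have : k^-1 * dotv (P b - P a) (P b - P a) <= dotv (P b - P a) (b - a).
  by rewrite [dotv _ (b - a)]dotvBl; lra.
by rewrite -(ler_pM2l k0) mulrA mulfV ?gt_eqF // mul1r.
Qed.

Lemma cocoercive_near a b r : 0 <= r ->
  (forall e, enorm e <= r -> U (a + e) /\ U (b + e)) ->
  dotv (P b - P a) (P b - P a) <= (k * r) ^+ 2 ->
  dotv (P b - P a) (P b - P a) <= k * dotv (P b - P a) (b - a).
Proof.
move=> r0 near hq; set q := P b - P a.
have small : enorm (k^-1 *: q) <= r.
  apply: enorm_le_sqr => //; rewrite !(dotvZl, dotvZr) mulrA -expr2.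
  by rewrite exprVn ler_pdivrMl ?exprn_gt0 // -exprMn.
have := near 0; rewrite !addr0 => -[|Ua Ub]; first by rewrite enorm0.
apply: cocoercive_of_reflections => //.
  by have [] := near (- (k^-1 *: q)); rewrite ?enormN.
by rewrite -(opprB (P b)) scalerN opprK; have [] := near (k^-1 *: q).
Qed.

(* Cut [a, b] into [N.+1] pieces so short that [cocoercive_near] applies to each;
   [dotv_telescope_le] adds the pieces up. *)
Lemma cocoercive a b : U a -> U b ->
  dotv (P b - P a) (P b - P a) <= k * dotv (P b - P a) (b - a).
Proof.
move=> Ua Ub; pose p t := a + t *: (b - a).
have [r r0 near_p] := open_convex_segment_nbhs openU convU Ua Ub.
have kr0 : 0 < (k * r) ^+ 2 by rewrite exprn_gt0 ?mulr_gt0.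
have [N hN] := exists_natS_ge (K * dotv (b - a) (b - a) / (k * r) ^+ 2).
have N0 : 0 < N.+1%:R :> R by rewrite ltr0n.
pose t j : R := j%:R / N.+1%:R.
have t01 j : (j <= N.+1)%N -> 0 <= t j <= 1.
  by move=> jN; rewrite divr_ge0 // ler_pdivrMr // mul1r ler_nat.
have Up j : (j <= N.+1)%N -> U (p (t j)).
  by move=> jN; rewrite -[p _]addr0; apply: near_p; rewrite ?t01 ?enorm0 ?ltW.
have step j : (j < N.+1)%N ->
    dotv (P (p (t j.+1)) - P (p (t j))) (P (p (t j.+1)) - P (p (t j)))
    <= k / N.+1%:R * dotv (P (p (t j.+1)) - P (p (t j))) (b - a).
  move=> jN; have dp : p (t j.+1) - p (t j) = N.+1%:R^-1 *: (b - a).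
    by rewrite /p /t -(natr1 j) mulrDl mul1r scalerDl opprD addrACA subrr add0r addrAC subrr add0r.
  rewrite -mulrA -dotvZr -dp; apply: (cocoercive_near (ltW r0)).
    by move=> e he; split; apply: near_p; rewrite ?t01 // ltnW.
  apply: le_trans (P_lip (Up _ jN) (Up _ (ltnW jN))) _.
  have hK : N.+1%:R^-1 * (K * dotv (b - a) (b - a)) <= (k * r) ^+ 2.
    by rewrite ler_pdivrMl // -ler_pdivrMr.
  rewrite dp !(dotvZl, dotvZr) [K * _]mulrCA [K * _]mulrCA.
  apply: le_trans (ler_wpM2l _ hK) _; first by rewrite invr_ge0 ltW.
  by rewrite ler_piMl ?(ltW kr0) // invf_le1 // ler1n.
have := dotv_telescope_le step.
have -> : p (t N.+1) = b by rewrite /p /t divff ?gt_eqF // scale1r addrC subrK.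
have -> : p (t 0%N) = a by rewrite /p /t mul0r scale0r addr0.
by rewrite mulrCA mulfV ?gt_eqF // mulr1.
Qed.

End Cocoercive.

Section StronglyConvex.
Variables (R : realType) (d : nat) (U : set 'rV[R]_d) (f : 'rV[R]_d -> R)
  (G : 'rV[R]_d -> 'rV[R]_d) (mu L : R).
Hypotheses (openU : open U) (convU : convex_set_ U) (mu0 : 0 < mu) (muL : mu <= L)
  (f_sc : forall x y, U x -> U y ->
     f x + dotv (G x) (y - x) + mu / 2 * enorm (y - x) ^+ 2 <= f y)
  (G_lip : forall x y, U x -> U y -> enorm (G x - G y) <= L * enorm (x - y)).

Lemma strongly_convex_convex x y : U x -> U y -> f x + dotv (G x) (y - x) <= f y.
Proof.
move=> Ux Uy; apply: le_trans (f_sc Ux Uy); rewrite lerDl.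
by rewrite mulr_ge0 ?sqr_ge0 ?divr_ge0 ?ltW.
Qed.

Lemma strongly_monotone a b : U a -> U b ->
  mu * dotv (a - b) (a - b) <= dotv (G a - G b) (a - b).
Proof.
move=> Ua Ub; have := f_sc Ua Ub; have := f_sc Ub Ua.
by rewrite -(opprB a b) enormN !enorm_sqr dotvNr [dotv (G a - _) _]dotvBl; lra.
Qed.

Lemma lipschitz_sqr a b : U a -> U b ->
  dotv (G a - G b) (G a - G b) <= L ^+ 2 * dotv (a - b) (a - b).
Proof.
move=> Ua Ub; rewrite -!enorm_sqr -exprMn lerXn2r ?nnegrE ?enorm_ge0 ?G_lip //.
by rewrite mulr_ge0 ?enorm_ge0 // (le_trans (ltW mu0)).
Qed.

Let phi x := f x - mu / 2 * dotv x x.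
Let P x := G x - mu *: x.

Lemma shifted_convex x z : U x -> U z -> phi x + dotv (P x) (z - x) <= phi z.
Proof.
move=> Ux Uz; have := f_sc Ux Uz; rewrite /phi /P enorm_sqr.
by rewrite !(dotvBl, dotvBr, dotvZl, dotvZr) (dotvC z x); lra.
Qed.

Lemma shifted_descent x z : U x -> U z ->
  phi z <= phi x + dotv (P x) (z - x) + (L - mu) / 2 * dotv (z - x) (z - x).
Proof.
move=> Ux Uz; have := descent convU strongly_convex_convex G_lip Ux Uz.
by rewrite /phi /P !(dotvBl, dotvBr, dotvZl, dotvZr) (dotvC z x); lra.
Qed.

Lemma shifted_lipschitz_sqr a b : U a -> U b ->
  dotv (P a - P b) (P a - P b) <= (L ^+ 2 - mu ^+ 2) * dotv (a - b) (a - b).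
Proof.
move=> Ua Ub; have := lipschitz_sqr Ua Ub; have := strongly_monotone Ua Ub.
have -> : P a - P b = (G a - G b) - mu *: (a - b).
  by apply/rowP => j; rewrite /P !mxE; ring.
move: (G a - G b) (a - b) => w u hmon hlip.
have := ler_wpM2l (ltW mu0) hmon.
by rewrite !(dotvBl, dotvBr, dotvZl, dotvZr) (dotvC u w); lra.
Qed.

(* [phi] is convex with the descent inequality for [L - mu]: co-coercivity of its
   gradient [P] is the sharpened inequality for [G]. *)
Theorem strongly_convex_cocoercive a b : U a -> U b ->
  dotv (G b - G a) (G b - G a) + mu * L * dotv (b - a) (b - a)
    <= (L + mu) * dotv (G b - G a) (b - a).
Proof.
move=> Ua Ub.
have eP : P b - P a = (G b - G a) - mu *: (b - a).
  by apply/rowP => j; rewrite /P !mxE; ring.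
have [Lmu|Lmu] := eqVneq L mu.
  have := shifted_lipschitz_sqr Ub Ua; rewrite Lmu subrr mul0r => hP.
  have : P b - P a == 0 by rewrite -dotvv_eq0 eq_le hP dotvv_ge0.
  by rewrite eP subr_eq0 => /eqP ->; rewrite !(dotvZl, dotvZr); lra.
have k0 : 0 < L - mu by rewrite subr_gt0 lt_neqAle eq_sym Lmu muL.
have := cocoercive openU convU k0 shifted_convex shifted_descent shifted_lipschitz_sqr Ua Ub.
rewrite eP; move: (G b - G a) (b - a) => w u.
by rewrite !(dotvBl, dotvBr, dotvZl, dotvZr) (dotvC u w); lra.
Qed.

End StronglyConvex.

Section Contraction.
Variables (R : realType) (d : nat).
Implicit Types (g h w u y z c : 'rV[R]_d) (mu L : R).

Lemma rate_ge0_lt1 mu L : 0 < mu -> mu <= L -> 0 <= (L - mu) / (L + mu) < 1.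
Proof.
move=> mu0 muL; have Lmu0 : 0 < L + mu by lra.
apply/andP; split; first by rewrite divr_ge0 ?subr_ge0 // ltW.
by rewrite ltr_pdivrMr // mul1r; lra.
Qed.

Lemma sqr_theta_add_sqr_rho mu L : 0 <= mu * L -> 0 < L + mu ->
  (2 * Num.sqrt (mu * L) / (L + mu)) ^+ 2 + ((L - mu) / (L + mu)) ^+ 2 = 1.
Proof.
by move=> muL0 Lmu0; rewrite !expr_div_n exprMn sqr_sqrtr //; field; rewrite gt_eqF.
Qed.

Lemma cocoercive_angle mu L w u : 0 <= mu * L -> 0 < L + mu ->
  dotv w w + mu * L * dotv u u <= (L + mu) * dotv w u ->
  2 * Num.sqrt (mu * L) / (L + mu) * (enorm w * enorm u) <= dotv w u.
Proof.
move=> muL0 Lmu0 hco; rewrite mulrAC ler_pdivrMr // [leRHS]mulrC.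
apply: le_trans _ hco; have s2 := sqr_sqrtr muL0; set s := Num.sqrt _ in s2 *.
rewrite -!enorm_sqr -s2; have := sqr_ge0 (enorm w - s * enorm u); lra.
Qed.

Lemma ball_argmin_toward_center (X : set 'rV[R]_d) g y z c (theta rho : R) :
  convex_set_ X -> X z -> X c -> theta ^+ 2 + rho ^+ 2 = 1 ->
  (forall p, X p -> enorm (p - y) <= theta * enorm (y - c) -> dotv g z <= dotv g p) ->
  enorm (z - y) <= theta * enorm (y - c) ->
  rho ^+ 2 * enorm (y - c) ^+ 2 < enorm (z - c) ^+ 2 ->
  0 <= dotv g (c - z).
Proof.
move=> convX Xz Xc tr zmin zy far; set r := enorm (y - c) in zmin zy far.
set D := enorm (z - c) ^+ 2 in far.
have D0 : 0 < D by apply: le_lt_trans far; rewrite mulr_ge0 ?sqr_ge0.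
pose e := 1 - rho ^+ 2 * r ^+ 2 / D.
have e0 : 0 < e by rewrite /e subr_gt0 ltr_pdivrMr // mul1r.
have e1 : e <= 1.
  by rewrite /e gerBl; apply: divr_ge0 (mulr_ge0 (sqr_ge0 _) (sqr_ge0 _)) (ltW D0).
have Xp : X (z + e *: (c - z)) by apply: convex_set_segment; rewrite // ltW.
have : enorm (z + e *: (c - z) - y) <= theta * r.
  apply: enorm_le_sqr; first exact: le_trans (enorm_ge0 _) zy.
  have -> : z + e *: (c - z) - y = (1 - e) *: (z - y) + e *: (c - y).
    by apply/rowP => j; rewrite !mxE; ring.
  apply: convex_comb_in_ball; first by rewrite ltW.
    by rewrite -enorm_sqr lerXn2r ?nnegrE ?enorm_ge0 // (le_trans (enorm_ge0 _) zy).
  have -> : z - y - (c - y) = z - c by rewrite opprB addrA subrK.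
  rewrite -!enorm_sqr -/D -(opprB y c) enormN -/r /e subKr divfK ?gt_eqF //.
  by rewrite exprMn (_ : rho ^+ 2 = 1 - theta ^+ 2); [ring | lra].
move=> /(zmin _ Xp); rewrite dotvDr dotvZr => hmin.
by rewrite -(pmulr_rge0 _ e0); lra.
Qed.

Lemma ball_argmin_contraction (X : set 'rV[R]_d) g h y z c mu L :
  0 < mu -> mu <= L -> convex_set_ X -> X z -> X c ->
  let theta := 2 * Num.sqrt (mu * L) / (L + mu) in
  let rho := (L - mu) / (L + mu) in
  (forall p, X p -> enorm (p - y) <= theta * enorm (y - c) -> dotv g z <= dotv g p) ->
  enorm (z - y) <= theta * enorm (y - c) ->
  0 <= dotv h (z - c) ->
  dotv (g - h) (g - h) + mu * L * dotv (y - c) (y - c) <= (L + mu) * dotv (g - h) (y - c) ->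
  enorm (z - c) ^+ 2 <= rho ^+ 2 * enorm (y - c) ^+ 2.
Proof.
move=> mu0 muL convX Xz Xc theta rho zmin zy hz hco.
have muL0 : 0 < mu * L by rewrite mulr_gt0 // (lt_le_trans mu0).
have Lmu0 : 0 < L + mu by rewrite addr_gt0 // (lt_le_trans mu0).
have tr : theta ^+ 2 + rho ^+ 2 = 1 := sqr_theta_add_sqr_rho (ltW muL0) Lmu0.
have th0 : 0 <= theta by rewrite /theta divr_ge0 ?mulr_ge0 ?sqrtr_ge0 ?ltW.
have zc : z - c = (z - y) + (y - c) by rewrite addrA subrK.
rewrite leNgt; apply/negP => far.
have gz := ball_argmin_toward_center convX Xz Xc tr zmin zy far.
have angle := cocoercive_angle (ltW muL0) Lmu0 hco; rewrite -/theta in angle.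
set r := enorm (y - c) in zy far angle; rewrite -!enorm_sqr -/r in hco.
set w := g - h in hco angle.
have r0 : 0 < r.
  rewrite lt_def enorm_ge0 andbT; apply: contraTneq far => r0.
  have : enorm (z - c) <= 0.
    rewrite zc; apply: le_trans (ler_enormD _ _) _.
    by rewrite -/r r0 addr0; move: zy; rewrite r0 mulr0.
  by move=> zc0; rewrite r0 -leNgt; have := enorm_ge0 (z - c); nra.
have w0 : 0 < enorm w.
  rewrite enorm_gt0; apply: contraTneq hco => w0.
  by rewrite w0 enorm0 !dotv0l expr2 !mul0r add0r mulr0 -ltNge mulr_gt0 // exprn_gt0.
have wzy : dotv w (z - y) <= - (theta * r * enorm w).
  have -> : z - y = (z - c) - (y - c) by rewrite opprB addrA subrK.
  have wzc : dotv w (z - c) = dotv g (z - c) - dotv h (z - c) by rewrite /w dotvBl.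
  by rewrite dotvBr wzc; move: gz; rewrite -(opprB z c) dotvNr; lra.
have thr0 := mulr_ge0 th0 (ltW r0).
rewrite mulrCA mulrC in angle.
have zyc := antipodal_dotv_le w0 thr0 zy wzy angle.
have zy2 : enorm (z - y) ^+ 2 <= (theta * r) ^+ 2 by rewrite lerXn2r ?nnegrE ?enorm_ge0.
have rr : dotv (y - c) (y - c) = r ^+ 2 by rewrite -enorm_sqr.
have rho2 : rho ^+ 2 = 1 - theta ^+ 2 by lra.
rewrite exprMn in zy2; move: far.
by rewrite zc enorm_sqr dotvDD rr -enorm_sqr rho2; lra.
Qed.

End Contraction.

Lemma strongly_convex_ball_step_contraction (R : realType) (d : nat)
    (U X : set 'rV[R]_d) (f : 'rV[R]_d -> R) (G : 'rV[R]_d -> 'rV[R]_d) (mu L : R) y z c :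
  open U -> convex_set_ U -> convex_set_ X -> X `<=` U -> 0 < mu -> mu <= L ->
  (forall x y, U x -> U y -> f x + dotv (G x) (y - x) + mu / 2 * enorm (y - x) ^+ 2 <= f y) ->
  (forall x y, U x -> U y -> enorm (G x - G y) <= L * enorm (x - y)) ->
  is_argmin f X c -> X y ->
  let theta := 2 * Num.sqrt (mu * L) / (L + mu) in
  is_argmin (dotv (G y)) (X `&` eball y (theta * enorm (y - c))) z ->
  enorm (z - c) ^+ 2 <= ((L - mu) / (L + mu)) ^+ 2 * enorm (y - c) ^+ 2.
Proof.
move=> openU convU convX XU mu0 muL f_sc G_lip cmin Xy theta [[Xz zball] zmin].
have [Xc _] := cmin.
have f_cvx := strongly_convex_convex mu0 f_sc.
have step := ball_argmin_contraction (g := G y) (h := G c) mu0 muL convX Xz Xc.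
apply: step.
- by move=> p Xp hp; apply: zmin; split.
- exact: zball.
- exact (argmin_first_order convU f_cvx G_lip convX XU cmin Xz).
- exact (strongly_convex_cocoercive openU convU mu0 muL f_sc G_lip (XU _ Xc) (XU _ Xy)).
Qed.

Lemma sum_tupleS_rcons (V : nmodType) (T : finType) k (F : seq T -> V) :
  \sum_(s : k.+1.-tuple T) F s = \sum_(t : k.-tuple T) \sum_(i : T) F (rcons t i).
Proof.
rewrite pair_big /=.
pose h (p : k.-tuple T * T) : k.+1.-tuple T := [tuple of rcons p.1 p.2].
pose hinv (s : k.+1.-tuple T) : k.-tuple T * T :=
  ([tuple of belast (thead s) (behead s)], last (thead s) (behead s)).
have ts (s : k.+1.-tuple T) : thead s :: behead s = s :> seq T.
  by rewrite [in RHS](tuple_eta s).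
rewrite (reindex h) //; exists hinv => [[t i] _ | s _]; last first.
  by apply: val_inj; rewrite /= -lastI ts.
have := ts (h (t, i)); rewrite lastI /= => /rcons_inj[ebl el].
by rewrite /hinv; congr pair => //; apply: val_inj.
Qed.

Section UniformMean.
Variables (R : realFieldType) (T : finType).

Definition uniform_mean k (e : seq T -> R) : R :=
  (#|T| ^ k)%:R^-1 * \sum_(s : k.-tuple T) e s.

Definition avg (c : T -> R) : R := #|T|%:R^-1 * \sum_i c i.

Hypothesis T0 : (0 < #|T|)%N.

Lemma avg_ge0 c : (forall i, 0 <= c i) -> 0 <= avg c.
Proof. by move=> c0; rewrite mulr_ge0 ?invr_ge0 ?sumr_ge0. Qed.

Lemma avg_lt c M : (forall i, c i < M) -> avg c < M.
Proof.
move=> cM; rewrite /avg ltr_pdivrMl ?ltr0n // mulr_natl -sumr_const ltr_sum //.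
by case/card_gt0P: T0 => i _; apply/hasP; exists i; rewrite ?mem_index_enum.
Qed.

Variables (e : seq T -> R) (c b : T -> R).
Hypothesis e_rcons : forall s i, e (rcons s i) <= c i * e s + b i.

Lemma uniform_mean0 : uniform_mean 0 e = e [::].
Proof.
rewrite /uniform_mean expn0 invr1 mul1r (big_pred1 [tuple]) // => t.
by apply/esym/eqP; exact: tuple0.
Qed.

Lemma uniform_meanS_le k : uniform_mean k.+1 e <= avg c * uniform_mean k e + avg b.
Proof.
have T0R : 0 < #|T|%:R :> R by rewrite ltr0n.
have Tk0 : 0 < (#|T| ^ k)%:R :> R by rewrite ltr0n expn_gt0 T0.
rewrite /uniform_mean /avg sum_tupleS_rcons expnSr natrM invfM.
set S := \sum_(t : k.-tuple T) e t; set Sc := \sum_i c i; set Sb := \sum_i b i.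
have hsum : \sum_(t : k.-tuple T) \sum_i e (rcons t i) <= Sc * S + Sb *+ (#|T| ^ k).
  apply: le_trans (_ : _ <= \sum_(t : k.-tuple T) \sum_i (c i * e t + b i)) _.
    by apply: ler_sum => t _; apply: ler_sum => i _; exact: e_rcons.
  under eq_bigr do rewrite big_split /= -mulr_suml.
  by rewrite big_split /= -mulr_sumr sumr_const card_tuple.
apply: le_trans (ler_wpM2l _ hsum) _; first by rewrite mulr_ge0 ?invr_ge0 ?ltW.
rewrite le_eqVlt; apply/orP; left; apply/eqP; rewrite -mulr_natr.
by field; rewrite !gt_eqF.
Qed.

Lemma uniform_mean_le k C : 0 <= avg c -> 0 <= C -> avg c * C + avg b <= C ->
  uniform_mean k e <= avg c ^+ k * e [::] + C.
Proof.
move=> c0 C0 hC; elim: k => [|k IH]; first by rewrite uniform_mean0 expr0 mul1r lerDl.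
apply: le_trans (uniform_meanS_le k) _.
by have := ler_wpM2l c0 IH; rewrite exprS; lra.
Qed.

End UniformMean.

Lemma uniform_mean_geometric_le (R : realFieldType) (T : finType) (e : seq T -> R)
    (c : T -> R) (D : R) k :
  (0 < #|T|)%N -> (forall i, 0 <= c i < 1) -> 0 <= D ->
  (forall s i, e (rcons s i) <= c i * e s + (1 + c i) * D) ->
  uniform_mean k e <= avg c ^+ k * e [::] + (1 + avg c) / (1 - avg c) * D.
Proof.
move=> T0 c01 D0 e_rcons.
have c0 : 0 <= avg c by apply: avg_ge0 => i; case/andP: (c01 i).
have c1 : avg c < 1 by apply: avg_lt => // i; case/andP: (c01 i).
apply: (uniform_mean_le T0 e_rcons k) => //.
  by rewrite mulr_ge0 // divr_ge0 //; lra.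
have -> : avg (fun i => (1 + c i) * D) = (1 + avg c) * D.
  rewrite /avg -mulr_suml big_split /= sumr_const -mulr_natl mulr1.
  by field; rewrite pnatr_eq0 -lt0n.
rewrite le_eqVlt; apply/orP; left; apply/eqP.
by field; rewrite subr_eq0 eq_sym lt_eqF.
Qed.

Theorem theorem13 (R : realType) (d n : nat) (hn : (0 < n)%N)
  (X U : set 'rV[R]_d) (F : 'I_n -> 'rV[R]_d -> R) (mu L : 'I_n -> R)
  (xstar : 'rV[R]_d) (xs : 'I_n -> 'rV[R]_d) (x0 : 'rV[R]_d)
  (x : seq 'I_n -> 'rV[R]_d) :
  X !=set0 -> closed X -> convex_set_ X ->
  open U -> convex_set_ U -> X `<=` U ->
  (forall i, forall y, U y -> differentiable (F i) y) ->
  (forall i, 0 < mu i /\ mu i <= L i) ->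
  (forall i, strongly_convex_on (mu i) (F i) U) ->
  (forall i, smooth_on (L i) (F i) U) ->
  is_argmin (fun y => n%:R^-1 * \sum_(i < n) F i y) X xstar ->
  (forall i, is_argmin (F i) X (xs i)) ->
  let D := \big[Num.max/0]_(i < n) enorm (xs i - xstar) in
  let theta := fun i => 2 * Num.sqrt (mu i * L i) / (L i + mu i) in
  let rho := fun i => (L i - mu i) / (L i + mu i) in
  let rhobar := n%:R^-1 * \sum_(i < n) rho i in
  X x0 -> x [::] = x0 ->
  (forall (s : seq 'I_n) (i : 'I_n),
     is_argmin (fun z => dotv (grad (F i) (x s)) z)
       (X `&` eball (x s) (theta i * enorm (x s - xs i))) (x (rcons s i))) ->
  (forall (s : seq 'I_n) (i : 'I_n),
     enorm (x (rcons s i) - xs i) ^+ 2 <= rho i ^+ 2 * enorm (x s - xs i) ^+ 2) /\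
  (forall k : nat,
     (n ^ k)%:R^-1 * \sum_(s : k.-tuple 'I_n) enorm (x s - xstar)
       <= rhobar ^+ k * enorm (x0 - xstar) + (1 + rhobar) / (1 - rhobar) * D).
Proof.
move=> _ _ convX openU convU XU _ muL sc smooth _ xs_min D theta rho rhobar Xx0 x_nil x_step.
have Xx s : X (x s).
  by case/lastP: s => [|s i]; [rewrite x_nil | case: (x_step s i) => -[]].
have contraction s i :
    enorm (x (rcons s i) - xs i) ^+ 2 <= rho i ^+ 2 * enorm (x s - xs i) ^+ 2.
  have [mu0 muLi] := muL i.
  exact (strongly_convex_ball_step_contraction (G := grad (F i)) openU convU convX XU
    mu0 muLi (sc i) (smooth i) (xs_min i) (Xx s) (x_step s i)).
split=> // k.
have rho01 i : 0 <= rho i < 1 by have [] := muL i; exact: rate_ge0_lt1.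
have D_ge i : enorm (xs i - xstar) <= D by exact: le_bigmax.
have step s i : enorm (x (rcons s i) - xstar) <= rho i * enorm (x s - xstar) + (1 + rho i) * D.
  have [rho0 _] := andP (rho01 i).
  apply: enorm_recenter_le (D_ge i) => //.
  have := contraction s i; rewrite -exprMn => hsq.
  by rewrite -(@ler_pXn2r _ 2) ?nnegrE ?enorm_ge0 ?(mulr_ge0 rho0 (enorm_ge0 _)).
have T0 : (0 < #|'I_n|)%N by rewrite card_ord.
have D0 : 0 <= D := le_trans (enorm_ge0 _) (D_ge (Ordinal hn)).
have := uniform_mean_geometric_le k T0 rho01 D0 step.
by rewrite /uniform_mean /avg card_ord x_nil.
Qed.
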